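(* Let $n>30$ with $n\equiv 0 \pmod 6$, and let the sets $\mathcal{H}_i$ of subgroups and $\Pi_i$ of permutations of $S_n$ ($-1\le i\le n/3-1$) be as defined in the context. Suppose $-1\le i<j\le n/3-1$, $H_i\in\mathcal{H}_i$ and $H_j\in\mathcal{H}_j$. Then $\Pi_i\cap H_j=\Pi_j\cap H_i=\emptyset$.
   Context: $S_n$ is the symmetric group on $\{1,\dots,n\}$, $n\equiv 0\pmod 6$. Subgroup classes: $\mathcal{H}_{-1}$ is the set of stabilizers in $S_n$ of partitions of $\{1,\dots,n\}$ into two blocks of size $n/2$ (a stabilizer may swap the two blocks); $\mathcal{H}_0=\{A_n\}$; for $1\le i\le n/3-1$, $\mathcal{H}_i$ is the set of setwise stabilizers in $S_n$ of $i$-element subsets of $\{1,\dots,n\}$. Permutation classes (cycle lengths listed, all of which together account for all $n$ points, so no further fixed points): $\Pi_{-1}$ is the set of $n$-cycles; $\Pi_0$ is the set of elements that are a product of two disjoint cycles of lengths $n/2-1$ and $n/2+1$ if $n/2$ is even, respectively of lengths $n/2-2$ and $n/2+2$ if $n/2$ is odd; $\Pi_1$ is the set of elements with exactly one fixed point and two further cycles of lengths $n/2-2$ and $n/2+1$; for odd $i$ with $3\le i\le n/3-1$, $\Pi_i$ is the set of products of three disjoint cycles of lengths $i$, $(n-i-1)/2$, $(n-i+1)/2$; for even $i$ with $2\le i\le n/3-1$ and $(n-i)/2$ odd, $\Pi_i$ is the set of products of three disjoint cycles of lengths $i,(n-i)/2,(n-i)/2$; for even $i$ with $4\le i\le n/3-1$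 and $(n-i)/2$ even, $\Pi_i$ is the set of products of three disjoint cycles of lengths $i,(n-i)/2-1,(n-i)/2+1$; if $(n-2)/2$ is even, $\Pi_2$ is the set of products of three disjoint cycles of lengths $2, n/2-4, n/2+2$. *)

From mathcomp Require Import all_boot all_algebra all_fingroup all_solvable.
Set Implicit Arguments. Unset Strict Implicit. Unset Printing Implicit Defensive.

(* Cycle type of a permutation: the multiset (as a sorted list) of the sizes of
   all its cycles (orbits), fixed points counting as cycles of length 1. *)
Definition cycle_type (n : nat) (s : {perm 'I_n}) : seq nat :=
  sort leq (map (fun X : {set 'I_n} => #|X|) (enum (porbits s))).

Definition has_cycles (n : nat) (s : {perm 'I_n}) (l : seq nat) : bool :=
  perm_eq (cycle_type s) l.

Definition Pi (n : nat) (i : int) (s : {perm 'I_n}) : bool :=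
  match i with
  | Negz 0 => has_cycles s [:: n]                                   (* i = -1 *)
  | Negz _ => false
  | Posz 0 => if ~~ odd (n %/ 2) then has_cycles s [:: (n %/ 2).-1; (n %/ 2).+1]
              else has_cycles s [:: n %/ 2 - 2; n %/ 2 + 2]
  | Posz 1 => has_cycles s [:: 1; n %/ 2 - 2; n %/ 2 + 1]
  | Posz k =>
      if odd k then has_cycles s [:: k; (n - k).-1 %/ 2; (n - k).+1 %/ 2]
      else if odd ((n - k) %/ 2) then
        has_cycles s [:: k; (n - k) %/ 2; (n - k) %/ 2]
      else if k == 2 then has_cycles s [:: 2; n %/ 2 - 4; n %/ 2 + 2]
      else has_cycles s [:: k; ((n - k) %/ 2).-1; ((n - k) %/ 2).+1]
  end.

Definition Hclass (n : nat) (i : int) (H : {set {perm 'I_n}}) : Prop :=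
  match i with
  | Negz 0 => (* stabilizer of a partition {A, ~A} into two blocks of size n/2 *)
      exists A : {set 'I_n}, #|A| = n %/ 2 /\
        H = ('N([set A; ~: A] | 'P^*))%g
  | Negz _ => False
  | Posz 0 => H = ('Alt_('I_n))%g
  | Posz k =>
      exists A : {set 'I_n}, #|A| = k /\ H = ('N(A | 'P))%g
  end.

From mathcomp Require Import all_boot all_algebra all_fingroup all_solvable.
From mathcomp Require Import zify.
Set Implicit Arguments. Unset Strict Implicit. Unset Printing Implicit Defensive.

(* A permutation stabilising a set A permutes the cycles inside A, so #|A| is a
   sum of some of its cycle lengths; a permutation swapping A and ~: A maps the
   part of each cycle in A onto the part outside A, so all its cycle lengths are
   even; and a permutation is even iff n minus its number of cycles is even.
   Membership in a group of H_h thus constrains the cycle type, and for p <> h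
   the explicit cycle type of Pi_p violates that constraint when n > 30 and
   6 divides n. *)

Fixpoint subsums (l : seq nat) : seq nat :=
  if l is a :: l' then subsums l' ++ map (addn a) (subsums l') else [:: 0].

Lemma sumn_mask_subsums m l : sumn (mask m l) \in subsums l.
Proof.
elim: l m => [|a l IHl] [|[] m] //=; rewrite mem_cat ?IHl //.
- by have := IHl [::]; rewrite mask0s => ->.
- by rewrite map_f ?orbT.
Qed.

Lemma perm_sumn_mask_subsums (s1 s2 : seq nat) m :
  perm_eq s1 s2 -> sumn (mask m s1) \in subsums s2.
Proof.
move=> /seq.permP s12.
have /count_maskP[m' _ /perm_sumn->] : forall x, count_mem x (mask m s1) <= count_mem x s2.
  by move=> x; rewrite -s12 leq_count_mask.
exact: sumn_mask_subsums.
Qed.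

Section CycleType.

Variables (n : nat) (s : {perm 'I_n}).

Lemma has_cycles_porbits l :
  has_cycles s l -> perm_eq [seq #|X| | X : {set 'I_n} <- enum (porbits s)] l.
Proof. by apply: perm_trans; rewrite perm_sym perm_sort. Qed.

Lemma odd_perm_cycles l : has_cycles s l -> odd_perm s = odd n (+) odd (size l).
Proof.
by move=> /has_cycles_porbits/perm_size; rewrite size_map -cardE /odd_perm card_ord => ->.
Qed.

Lemma porbit_mono_mem (A : {set 'I_n}) x y :
  {mono s : z / z \in A} -> y \in porbit s x -> (y \in A) = (x \in A).
Proof.
move=> sA /porbitP[i ->]; elim: i => [|i IHi]; first by rewrite expg0 perm1.
by rewrite expgSr permM sA.
Qed.

Lemma card_mono_subsums (A : {set 'I_n}) l :
  {mono s : z / z \in A} -> has_cycles s l -> #|A| \in subsums l.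
Proof.
move=> sA /has_cycles_porbits sl.
have -> : #|A| = \sum_(X in porbits s | X \in porbit s @: A) #|X|.
  rewrite (eq_bigl (mem (porbit s @: A))) => [|X]; last first.
    by rewrite andb_idl // => /imsetP[x _ ->]; exact: imset_f.
  rewrite -sum1_card (partition_big_imset (porbit s)) /=.
  apply: eq_bigr => _ /imsetP[x xA ->]; rewrite -sum1_card.
  apply: eq_bigl => y; rewrite eq_porbit_mem andb_idl // => yx.
  by rewrite (porbit_mono_mem sA yx).
rewrite -big_enum_cond -big_filter filter_mask.
have := perm_sumn_mask_subsums [seq X \in porbit s @: A | X <- enum (porbits s)] sl.
by rewrite -map_mask sumnE big_map.
Qed.

Lemma swap_cycles_even (A : {set 'I_n}) l :
  (forall y, (s y \in A) = (y \notin A)) -> has_cycles s l -> all (fun c => ~~ odd c) l.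
Proof.
move=> sA /has_cycles_porbits sl; rewrite -(perm_all _ sl) all_map.
apply/allP => X; rewrite mem_enum => /imsetP[x _ ->] /=.
have s_porbit y : s y \in porbit s x = (y \in porbit s x).
  by rewrite -!eq_porbit_mem -(porbit_perm s 1 y) expg1.
have card_le (B C : {set 'I_n}) : (forall y, y \in B -> s y \in C) -> #|B| <= #|C|.
  move=> BC; rewrite -(card_imset B (@perm_inj _ s)).
  by apply/subset_leq_card/subsetP => _ /imsetP[y /BC yC ->].
have le1 : #|porbit s x :&: A| <= #|porbit s x :\: A|.
  by apply: card_le => y; rewrite !inE sA s_porbit => /andP[-> ->].
have le2 : #|porbit s x :\: A| <= #|porbit s x :&: A|.
  by apply: card_le => y; rewrite !inE sA s_porbit => /andP[-> ->].
rewrite -(cardsID A); lia.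
Qed.

End CycleType.

Definition Hclass_cycle_condition (n : nat) (h : int) (l : seq nat) : bool :=
  match h with
  | Negz 0 => (n %/ 2 \in subsums l) || all (fun c => ~~ odd c) l
  | Negz _ => false
  | Posz 0 => ~~ (odd n (+) odd (size l))
  | Posz k => k \in subsums l
  end.

Lemma Hclass_cycle_conditionP n h H (s : {perm 'I_n}) l :
  Hclass h H -> s \in H -> has_cycles s l -> Hclass_cycle_condition n h l.
Proof.
case: h => [[|k]|[|k]] //=.
- by move=> ->; rewrite Alt_even => sH /odd_perm_cycles <-.
- by move=> [A [<- ->]] /astabsP sA; apply: card_mono_subsums => y; exact: sA.
- move=> [A [<- ->]] /astabsP sA sl; have := sA A.
  rewrite !inE eqxx orTb => /orP[] /eqP sAs.
    have sAA : s @: A = A := sAs.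
    rewrite (card_mono_subsums _ sl) // => y.
    by rewrite -{1}sAA (mem_imset _ _ (@perm_inj _ s)).
  have sAC : s @: A = ~: A := sAs.
  rewrite (@swap_cycles_even _ _ A _ _ sl) ?orbT // => y.
  by rewrite -[y \in A](mem_imset _ _ (@perm_inj _ s)) sAC inE negbK.
Qed.

Lemma Pi_violates_Hclass_cycle_condition n p h (s : {perm 'I_n}) :
  30 < n -> n %% 6 = 0 ->
  (-1 <= p)%R -> (p <= (n %/ 3)%:Z - 1)%R ->
  (-1 <= h)%R -> (h <= (n %/ 3)%:Z - 1)%R -> p != h ->
  Pi p s -> exists2 l, has_cycles s l & ~~ Hclass_cycle_condition n h l.
Proof.
move=> n_gt30 n_mod6 p_ge p_le h_ge h_le p_neq_h.
(* Once p, h and the parity branches of Pi are fixed, all data are linear in n. *)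
case: p p_ge p_le p_neq_h => [[|[|k]]|[|k]] //= p_ge p_le p_neq_h;
  repeat case: ifP => ?; move=> sl; apply: (ex_intro2 (has_cycles s) _ _ sl);
  case: h h_ge h_le p_neq_h => [[|k']|[|k']] //= h_ge h_le p_neq_h; rewrite ?inE; lia.
Qed.

Lemma Pi_Hclass_disjoint n p h (H : {set {perm 'I_n}}) :
  Hclass h H -> 30 < n -> n %% 6 = 0 ->
  (-1 <= p)%R -> (p <= (n %/ 3)%:Z - 1)%R ->
  (-1 <= h)%R -> (h <= (n %/ 3)%:Z - 1)%R -> p != h ->
  [set s | Pi p s] :&: H = set0.
Proof.
move=> hH n_gt30 n_mod6 p_ge p_le h_ge h_le p_neq_h.
apply/setP => s; rewrite !inE; apply/negbTE/andP => -[sPi sH].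
have [l sl] :=
  Pi_violates_Hclass_cycle_condition n_gt30 n_mod6 p_ge p_le h_ge h_le p_neq_h sPi.
by rewrite (Hclass_cycle_conditionP hH sH sl).
Qed.

Theorem lemma3p6 (n : nat) (i j : int) (Hi Hj : {set {perm 'I_n}}) :
  30 < n -> n %% 6 = 0 ->
  (-1 <= i)%R -> (i < j)%R -> (j <= (n %/ 3)%:Z - 1)%R ->
  Hclass i Hi -> Hclass j Hj ->
  [set s | Pi i s] :&: Hj = set0 /\ [set s | Pi j s] :&: Hi = set0.
Proof.
move=> n_gt30 n_mod6 i_ge i_lt_j j_le HiC HjC.
have i_le : (i <= (n %/ 3)%:Z - 1)%R by lia.
have j_ge : (-1 <= j)%R by lia.
by split; [apply: (Pi_Hclass_disjoint HjC) | apply: (Pi_Hclass_disjoint HiC)] => //; lia.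
Qed.
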